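(* Suppose $R=0$ and $f$ satisfies the Polyak–Łojasiewicz condition with constant $\mu>0$: $\|\nabla f(x)\|^2\ge2\mu(f(x)-f^\star)$ for all $x$, with $f^\star=f(x^\star)$ for a minimizer $x^\star$ of $f$. In DIANA (i.e., EF-BV with $\nu=1$) with compressors in $\mathbb{C}(\eta,\omega)$, suppose $\lambda\in(0,1]$ is such that $r<1$, and $$0<\gamma\le\frac{1}{L+\tilde L\sqrt{\frac{r_{\mathrm{av}}}{r}}\frac1{s^\star}}.$$ For $t\ge0$ let $\Psi^t=f(x^t)-f^\star+\frac{\gamma}{2\theta^\star}\frac1n\sum_{i=1}^n\|\nabla f_i(x^t)-h_i^t\|^2$. Then for every $t\ge0$, $\mathbb{E}[\Psi^t]\le\big(\max(1-\gamma\mu,\frac{r+1}{2})\big)^t\Psi^0$.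
   Context: $f=\frac1n\sum_if_i$, each $f_i:\mathbb{R}^d\to\mathbb{R}$ convex and $L_i$-smooth; $\tilde L=\sqrt{\frac1n\sum_iL_i^2}$; $f$ is $L$-smooth with $L\le\tilde L$. For $\eta\in[0,1)$, $\omega\ge0$, $\mathbb{C}(\eta,\omega)$ is the class of randomized operators $\mathcal{C}:\mathbb{R}^d\to\mathbb{R}^d$ with $\|\mathbb{E}[\mathcal{C}(x)]-x\|\le\eta\|x\|$ and $\mathbb{E}\|\mathcal{C}(x)-\mathbb{E}[\mathcal{C}(x)]\|^2\le\omega\|x\|^2$ for all $x$. Compressors $\mathcal{C}_i^t$ all lie in $\mathbb{C}(\eta,\omega)$, those at iteration $t$ are independent of previous randomness, and $\omega_{\mathrm{av}}\in[0,\omega]$ satisfies $\mathbb{E}\|\frac1n\sum_i(\mathcal{C}_i^t(x_i)-\mathbb{E}[\mathcal{C}_i^t(x_i)])\|^2\le\frac{\omega_{\mathrm{av}}}{n}\sum_i\|x_i\|^2$ for all $t$ and $x_1,\dots,x_n$. DIANA: given $x^0,h_1^0,\dots,h_n^0$, $\gamma>0$, $\lambda\in(0,1]$, $h^0=\frac1n\sum_ih_i^0$; for $t\ge0$: $d_i^t=\mathcal{C}_i^t(\nabla f_i(x^t)-h_i^t)$, $h_i^{t+1}=h_i^t+\lambda d_i^t$, $d^t=\frac1n\sum_id_i^t$, $h^{t+1}=h^t+\lambda d^t$, $g^{t+1}=h^t+d^t$, $x^{t+1}=x^t-\gamma g^{t+1}$ (here $R=0$). Constants: $r=(1-\lambda+\lambda\eta)^2+\lambda^2\omega$,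 $r_{\mathrm{av}}=\eta^2+\omega_{\mathrm{av}}$, $s^\star=\sqrt{\frac{1+r}{2r}}-1$, $\theta^\star=s^\star(1+s^\star)\frac{r}{r_{\mathrm{av}}}$ (with $r>0$, $r_{\mathrm{av}}>0$). *)

From HB Require Import structures.
From mathcomp Require Import all_boot all_order all_algebra.
From mathcomp Require Import all_classical all_reals all_analysis.
Set Implicit Arguments. Unset Strict Implicit. Unset Printing Implicit Defensive.
Import Order.TTheory GRing.Theory Num.Theory.
Import numFieldNormedType.Exports.
Local Open Scope ring_scope.

Definition dotv (R : realType) (d : nat) (u v : 'rV[R]_d) : R :=
  \sum_(j < d) u ord0 j * v ord0 j.
Definition sqnorm (R : realType) (d : nat) (u : 'rV[R]_d) : R := dotv u u.
Definition enorm (R : realType) (d : nat) (u : 'rV[R]_d) : R :=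
  Num.sqrt (sqnorm u).

Definition convex_fun (R : realType) (d : nat) (f : 'rV[R]_d -> R) : Prop :=
  forall (x y : 'rV[R]_d) (a : R), 0 <= a -> a <= 1 ->
    f (a *: x + (1 - a) *: y) <= a * f x + (1 - a) * f y.

Definition has_gradient (R : realType) (d : nat)
  (f : 'rV[R]_d -> R) (g : 'rV[R]_d -> 'rV[R]_d) : Prop :=
  forall x v : 'rV[R]_d, is_derive x v f (dotv (g x) v).

Definition smooth_with (R : realType) (d : nat)
  (f : 'rV[R]_d -> R) (g : 'rV[R]_d -> 'rV[R]_d) (L : R) : Prop :=
  has_gradient f g /\
  forall x y : 'rV[R]_d, enorm (g x - g y) <= L * enorm (x - y).

(* A randomized operator is modelled as C : T -> R^d -> R^d, where the
   randomness xi : T is drawn from the probability P. *)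
Definition Emean (dT : measure_display) (T : measurableType dT) (R : realType)
  (d : nat) (P : probability T R) (C : T -> 'rV[R]_d -> 'rV[R]_d)
  (x : 'rV[R]_d) : 'rV[R]_d :=
  \row_(j < d) Rintegral P setT (fun xi => C xi x ord0 j).

Definition in_class (dT : measure_display) (T : measurableType dT)
  (R : realType) (d : nat) (P : probability T R)
  (C : T -> 'rV[R]_d -> 'rV[R]_d) (eta omega : R) : Prop :=
  forall x : 'rV[R]_d,
    (forall j : 'I_d, P.-integrable setT (fun xi => (C xi x ord0 j)%:E)) /\
    enorm (Emean P C x - x) <= eta * enorm x /\
    (\int[P]_xi (sqnorm (C xi x - Emean P C x))%:E <= (omega * sqnorm x)%:E)%E.

Definition upd (T : Type) (s : nat -> T) (k : nat) (xi : T) : nat -> T :=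
  fun m => if m == k then xi else s m.

(* The compressors of iteration t are
   C i t (s t) where s t is the seed of iteration t, drawn from P t
   independently across iterations.  State = (x^t, (h_i^t)_i, h^t). *)
Fixpoint diana (T : Type) (R : realType) (d n : nat)
  (gf : 'I_n -> 'rV[R]_d -> 'rV[R]_d)
  (C : 'I_n -> nat -> T -> 'rV[R]_d -> 'rV[R]_d)
  (gamma lambda : R) (x0 : 'rV[R]_d) (h0 : 'I_n -> 'rV[R]_d)
  (s : nat -> T) (t : nat) : 'rV[R]_d * ('I_n -> 'rV[R]_d) * 'rV[R]_d :=
  match t with
  | 0 => (x0, h0, n%:R^-1 *: \sum_(i < n) h0 i)
  | t'.+1 =>
    let: (x, h, hb) := diana gf C gamma lambda x0 h0 s t' in
    let dd := fun i : 'I_n => C i t' (s t') (gf i x - h i) in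
    let db := n%:R^-1 *: \sum_(i < n) dd i in
    (x - gamma *: (hb + db), (fun i => h i + lambda *: dd i), hb + lambda *: db)
  end.

(* Expectation over the seeds of iterations 0, ..., k-1 (product of the
   probabilities P 0, ..., P (k-1), as iterated integrals; the seed of the
   latest iteration is integrated innermost).  Seeds with index >= k are
   taken from s. *)
Fixpoint iexp (dT : measure_display) (T : measurableType dT) (R : realType)
  (P : nat -> probability T R) (k : nat) (F : (nat -> T) -> \bar R)
  (s : nat -> T) : \bar R :=
  match k with
  | 0 => F s
  | k'.+1 => iexp P k' (fun s' => (\int[P k']_xi F (upd s' k' xi))%E) s
  end.

(* One DIANA step contracts, in conditional expectation, the Lyapunov function
   f(x) - f(xstar) + c avg_i |grad f_i(x) - h_i|^2, c = gamma / (2 thetastar),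
   by the factor max(1 - gamma mu, (r + 1) / 2).  The descent lemma and the PL
   inequality turn the f-part into (1 - gamma mu)(f(x) - f(xstar)) plus gamma/2
   times the error of the gradient estimate; Young's inequality with parameter
   sstar splits the new shift errors into a compressed part and an L_i-Lipschitz
   part, and the step-size condition makes the descent absorb the latter.  A
   bias-variance decomposition bounds the two compression errors by r_av and r
   times avg_i |grad f_i(x) - h_i|^2, and thetastar balances them so that together
   they contract by (r + 1) / 2.  Iterating through the nested expectations gives
   the geometric rate. *)

From HB Require Import structures.
From mathcomp Require Import all_boot all_order all_algebra.
From mathcomp Require Import all_classical all_reals all_analysis.
From mathcomp Require Import measurable_realfun measurable_fun_approximation.
From mathcomp Require Import ring lra.
Import Order.TTheory GRing.Theory Num.Theory.
Import numFieldNormedType.Exports.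
Set Implicit Arguments. Unset Strict Implicit. Unset Printing Implicit Defensive.
Local Open Scope ring_scope.

Section Euclidean.
Context (R : realType) (d : nat).
Implicit Types (u v w : 'rV[R]_d) (a s : R).

Lemma dotvC u v : dotv u v = dotv v u.
Proof. by apply: eq_bigr => j _; rewrite mulrC. Qed.

Lemma dotvDl u w v : dotv (u + w) v = dotv u v + dotv w v.
Proof. by rewrite /dotv -big_split; apply: eq_bigr => j _; rewrite mxE mulrDl. Qed.

Lemma dotvZl a u v : dotv (a *: u) v = a * dotv u v.
Proof. by rewrite /dotv mulr_sumr; apply: eq_bigr => j _; rewrite mxE mulrA. Qed.

Lemma dotvBl u w v : dotv (u - w) v = dotv u v - dotv w v.
Proof. by rewrite -scaleN1r dotvDl dotvZl mulN1r. Qed.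

Lemma dotvDr u w v : dotv v (u + w) = dotv v u + dotv v w.
Proof. by rewrite dotvC dotvDl !(dotvC v). Qed.

Lemma dotvZr a u v : dotv v (a *: u) = a * dotv v u.
Proof. by rewrite dotvC dotvZl dotvC. Qed.

Lemma dotvBr u w v : dotv v (u - w) = dotv v u - dotv v w.
Proof. by rewrite dotvC dotvBl !(dotvC v). Qed.

Lemma dotv_suml (I : finType) (F : I -> 'rV[R]_d) v :
  dotv (\sum_i F i) v = \sum_i dotv (F i) v.
Proof.
rewrite /dotv exchange_big; apply: eq_bigr => j _.
by rewrite summxE mulr_suml.
Qed.

Lemma sqnorm_ge0 u : 0 <= sqnorm u.
Proof. by apply: sumr_ge0 => j _; rewrite -expr2 sqr_ge0. Qed.

Lemma sqnormD u v : sqnorm (u + v) = sqnorm u + 2 * dotv u v + sqnorm v.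
Proof. rewrite /sqnorm !dotvDl !dotvDr (dotvC v u); ring. Qed.

Lemma sqnormB u v : sqnorm (u - v) = sqnorm u - 2 * dotv u v + sqnorm v.
Proof. rewrite /sqnorm !dotvBl !dotvBr (dotvC v u); ring. Qed.

Lemma sqnormZ a u : sqnorm (a *: u) = a ^+ 2 * sqnorm u.
Proof. rewrite /sqnorm dotvZl dotvZr; ring. Qed.

Lemma sqnorm_eq0 u : (sqnorm u == 0) = (u == 0).
Proof.
apply/idP/eqP => [|->]; last by rewrite /sqnorm /dotv big1 // => j _; rewrite mxE mul0r.
rewrite psumr_eq0 => [/allP u0|j _]; last by rewrite -expr2 sqr_ge0.
apply/rowP => j; rewrite mxE; apply/eqP.
by rewrite -sqrf_eq0 expr2; apply: u0; exact: mem_index_enum.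
Qed.

Lemma enorm_ge0 u : 0 <= enorm u.
Proof. exact: sqrtr_ge0. Qed.

Lemma enorm_sqr u : enorm u ^+ 2 = sqnorm u.
Proof. by rewrite sqr_sqrtr // sqnorm_ge0. Qed.

Lemma enormZ a u : enorm (a *: u) = `|a| * enorm u.
Proof. by rewrite /enorm sqnormZ sqrtrM ?sqr_ge0 // sqrtr_sqr. Qed.

Lemma enormN u : enorm (- u) = enorm u.
Proof. by rewrite -scaleN1r enormZ normrN normr1 mul1r. Qed.

Lemma sqnorm_le u v k : enorm u <= k * enorm v -> sqnorm u <= k ^+ 2 * sqnorm v.
Proof.
move=> uv; rewrite -!enorm_sqr -exprMn ler_pXn2r ?nnegrE ?enorm_ge0 //.
exact: le_trans (enorm_ge0 _) uv.
Qed.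

(* From [0 <= |s u - v|^2]. *)
Lemma dotv_le_young u v s : 0 < s ->
  2 * dotv u v <= s * sqnorm u + s^-1 * sqnorm v.
Proof.
move=> s0; have := sqnorm_ge0 (s *: u - v).
rewrite sqnormB sqnormZ dotvZl => h; rewrite -subr_ge0.
have -> : s * sqnorm u + s^-1 * sqnorm v - 2 * dotv u v =
    s^-1 * (s ^+ 2 * sqnorm u - 2 * (s * dotv u v) + sqnorm v).
  by field; rewrite gt_eqF.
by rewrite mulr_ge0 // invr_ge0 ltW.
Qed.

Lemma sqnormD_le u v s : 0 < s ->
  sqnorm (u + v) <= (1 + s) * sqnorm u + (1 + s^-1) * sqnorm v.
Proof. by move=> s0; rewrite sqnormD; have := dotv_le_young u v s0; lra. Qed.

Lemma dotv_le_enorm u v : dotv u v <= enorm u * enorm v.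
Proof.
have [->|u0] := eqVneq u 0.
  by rewrite /dotv big1 ?mulr_ge0 ?enorm_ge0 // => j _; rewrite mxE mul0r.
have [->|v0] := eqVneq v 0.
  by rewrite /dotv big1 ?mulr_ge0 ?enorm_ge0 // => j _; rewrite mxE mulr0.
have nu : 0 < enorm u by rewrite sqrtr_gt0 lt_def sqnorm_eq0 u0 sqnorm_ge0.
have nv : 0 < enorm v by rewrite sqrtr_gt0 lt_def sqnorm_eq0 v0 sqnorm_ge0.
have := dotv_le_young u v (divr_gt0 nv nu).
rewrite -!enorm_sqr invf_div.
have -> : enorm v / enorm u * enorm u ^+ 2 + enorm u / enorm v * enorm v ^+ 2
    = 2 * (enorm u * enorm v) by field; rewrite ?gt_eqF.
by rewrite ler_pM2l.
Qed.

Lemma enormD u v : enorm (u + v) <= enorm u + enorm v.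
Proof.
rewrite -(ler_pXn2r (isT : (0 < 2)%N)) ?nnegrE ?addr_ge0 ?enorm_ge0 //.
by rewrite enorm_sqr sqnormD -!enorm_sqr; have := dotv_le_enorm u v; nra.
Qed.

(* Jensen's inequality, via [0 <= sum_i |F i - m|^2] for the average [m]. *)
Lemma sqnorm_avg_le (n : nat) (F : 'I_n -> 'rV[R]_d) : (0 < n)%N ->
  sqnorm (n%:R^-1 *: \sum_i F i) <= n%:R^-1 * \sum_i sqnorm (F i).
Proof.
move=> n0; set m := n%:R^-1 *: \sum_i F i.
have np : (0 : R) < n%:R by rewrite ltr0n.
have sumF : \sum_i F i = n%:R *: m by rewrite /m scalerA divff ?gt_eqF // scale1r.
have : 0 <= \sum_i sqnorm (F i - m) by apply: sumr_ge0 => i _; exact: sqnorm_ge0.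
under eq_bigr do rewrite sqnormB.
rewrite !big_split /= sumrN -mulr_sumr -dotv_suml sumF dotvZl sumr_const card_ord.
rewrite -/(sqnorm m) -mulr_natl => h.
have -> : sqnorm m = n%:R^-1 * (n%:R * sqnorm m) by rewrite mulKf ?gt_eqF.
by apply: ler_wpM2l; [rewrite invr_ge0 ltW | lra].
Qed.

Lemma sqnorm_shift_le u m (l e : R) : 0 <= l <= 1 -> enorm (m - u) <= e * enorm u ->
  sqnorm ((- l) *: m + u) <= (1 - l + l * e) ^+ 2 * sqnorm u.
Proof.
move=> /andP[l0 l1] mu; apply: sqnorm_le.
have -> : (- l) *: m + u = (1 - l) *: u + l *: (u - m) by apply/rowP => j; rewrite !mxE; ring.
apply: le_trans (enormD _ _) _.
rewrite !enormZ -[enorm (u - m)]enormN opprB (ger0_norm l0) ger0_norm ?subr_ge0 //.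
by have := ler_wpM2l l0 mu; lra.
Qed.

Lemma lipschitz_neg_trivial (F : 'rV[R]_d -> 'rV[R]_d) (L : R) :
  (forall x y, enorm (F x - F y) <= L * enorm (x - y)) -> L < 0 -> forall v, v = 0.
Proof.
move=> FL L0 v; have := le_trans (enorm_ge0 _) (FL v 0).
rewrite subr0 nmulr_rge0 // => v0.
have : enorm v == 0 by rewrite eq_le v0 enorm_ge0.
rewrite sqrtr_eq0 => {}v0.
by apply/eqP; rewrite -sqnorm_eq0 eq_le v0 sqnorm_ge0.
Qed.

End Euclidean.

Section Smoothness.
Context (R : realType) (d : nat).
Implicit Types (f : 'rV[R]_d -> R) (g : 'rV[R]_d -> 'rV[R]_d).

Lemma is_derive_line f g x v (t : R) : has_gradient f g ->
  is_derive t (1 : R) (fun s : R => f (x + s *: v)) (dotv (g (x + t *: v)) v).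
Proof.
move=> fg; have [fx dfx] := fg (x + t *: v) v.
have quotE : (fun h : R => h^-1 *: (((fun s : R => f (x + s *: v)) \o shift t) (h *: 1)
                                       - f (x + t *: v)))
    = (fun h : R => h^-1 *: ((f \o shift (x + t *: v)) (h *: v) - f (x + t *: v))).
  apply: funext => h /=; congr (_ *: (f _ - _)).
  by rewrite [h%:A]mulr1 scalerDl addrCA addrA.
by apply: DeriveDef; rewrite ?/derivable ?/derive quotE.
Qed.

Lemma descent_lemma f g (L : R) x y : has_gradient f g ->
  (forall x y, enorm (g x - g y) <= L * enorm (x - y)) ->
  f y <= f x + dotv (g x) (y - x) + L / 2 * sqnorm (y - x).
Proof.
move=> fg gL; set v := y - x; set c := dotv (g x) v; set k := L / 2 * sqnorm v.
pose psi s := f (x + s *: v) - c * s - k * s ^+ 2.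
have dpsi s : is_derive s (1 : R) psi (dotv (g (x + s *: v) - g x) v - k * (2 * s)).
  have := is_deriveB (is_deriveB (is_derive_line x v s fg) (is_deriveZ c (is_derive_id s 1)))
    (is_deriveZ k (is_deriveX 2 (is_derive_id s 1))).
  have -> : psi = ((fun s : R => f (x + s *: v)) - c \*: id) - k \*: (@id R) ^+ 2.
    by apply: funext => r; rewrite /psi /= /GRing.scale.
  move=> /is_derive_eq; apply.
  by rewrite dotvBl /GRing.scale /= !mulr1 expr1.
have : psi 1 <= psi 0.
  apply: (@ler0_derive1_le_cc R psi 0 1); last 3 first.
  - by rewrite in_itv /= ler01 lexx.
  - by rewrite in_itv /= ler01 lexx.
  - exact: ler01.
  - by move=> s _; case: (dpsi s).
  - move=> s; rewrite in_itv /= => /andP[s0 _].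
    rewrite derive1E (@derive_val _ _ _ _ _ _ _ (dpsi s)).
    have gs := gL (x + s *: v) x.
    rewrite addrAC subrr add0r enormZ (ger0_norm (ltW s0)) mulrA in gs.
    have lip : enorm (g (x + s *: v) - g x) * enorm v <= L * s * sqnorm v.
      by rewrite -enorm_sqr expr2 mulrA ler_wpM2r ?enorm_ge0.
    by have := dotv_le_enorm (g (x + s *: v) - g x) v; rewrite /k; lra.
  - by apply: derivable_within_continuous => s _; case: (dpsi s).
have xvy : x + v = y by rewrite addrC subrK.
by rewrite /psi scale1r scale0r addr0 xvy expr1n expr0n /=; lra.
Qed.

Lemma has_gradient_avg (n : nat) (fs : 'I_n -> 'rV[R]_d -> R)
    (gs : 'I_n -> 'rV[R]_d -> 'rV[R]_d) :
  (forall i, has_gradient (fs i) (gs i)) ->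
  has_gradient (fun x => n%:R^-1 * \sum_(i < n) fs i x)
               (fun x => n%:R^-1 *: \sum_(i < n) gs i x).
Proof.
move=> fg x v.
have := is_deriveZ n%:R^-1 (is_derive_sum (fun i => fg i x v)).
have -> : n%:R^-1 \*: \sum_(i < n) fs i = (fun x => n%:R^-1 * \sum_(i < n) fs i x).
  by apply: funext => y /=; rewrite fct_sumE.
by move=> /is_derive_eq; apply; rewrite dotvZl dotv_suml.
Qed.

End Smoothness.

Lemma le_integral_pointwise (dT : measure_display) (T : measurableType dT) (R : realType)
    (mu : {measure set T -> \bar R}) (F G : T -> \bar R) :
  (forall x, F x <= G x)%E -> (\int[mu]_x F x <= \int[mu]_x G x)%E.
Proof.
move=> FG; have FG' : {in setT, forall x, ((F \_ setT) x <= (G \_ setT) x)%E}.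
  by move=> x _; rewrite /patch /= in_setT.
apply: leeB; apply: ge_ereal_sup => _ [h /= hF <-]; apply: ereal_sup_ubound;
  exists h => //= x.
- exact: le_trans (hF x) (funepos_le FG' (in_setT x)).
- exact: le_trans (hF x) (funeneg_le FG' (in_setT x)).
Qed.

Section Expectation.
Context (dT : measure_display) (T : measurableType dT) (R : realType)
  (P : probability T R).
Implicit Types (f g : T -> R) (c : R).

Definition rintegrable f := P.-integrable setT (EFin \o f).
Definition Ex f := \int[P]_(x in setT) f x.

Lemma eq_rintegrable f g : f =1 g -> rintegrable f -> rintegrable g.
Proof. by move=> fg; apply: eq_integrable => // x _; rewrite /= fg. Qed.

Lemma eq_Ex f g : f =1 g -> Ex f = Ex g.
Proof. by move=> /funext ->. Qed.

Lemma rintegrable_cst c : rintegrable (fun=> c).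
Proof. exact: finite_measure_integrable_cst. Qed.

Lemma rintegrableD f g : rintegrable f -> rintegrable g ->
  rintegrable (fun x => f x + g x).
Proof.
by move=> fi gi; apply: eq_rintegrable (integrableD _ fi gi) => // x; rewrite /= EFinD.
Qed.

Lemma rintegrableZ c f : rintegrable f -> rintegrable (fun x => c * f x).
Proof.
by move=> fi; apply: eq_rintegrable (integrableZl _ c fi) => // x; rewrite /= EFinM.
Qed.

Lemma rintegrableB f g : rintegrable f -> rintegrable g ->
  rintegrable (fun x => f x - g x).
Proof.
move=> fi gi; apply: rintegrableD => //.
by apply: eq_rintegrable (rintegrableZ (-1) gi) => x; rewrite mulN1r.
Qed.

Lemma rintegrable_sum (I : Type) (s : seq I) (F : I -> T -> R) :
  (forall i, rintegrable (F i)) -> rintegrable (fun x => \sum_(i <- s) F i x).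
Proof.
move=> Fi; elim: s => [|i s ih].
  by apply: eq_rintegrable (rintegrable_cst 0) => x; rewrite big_nil.
by apply: eq_rintegrable (rintegrableD (Fi i) ih) => x; rewrite big_cons.
Qed.

Lemma Ex_cst c : Ex (fun=> c) = c.
Proof. by rewrite /Ex Rintegral_cst //= probability_setT /= mulr1. Qed.

Lemma ExD f g : rintegrable f -> rintegrable g -> Ex (fun x => f x + g x) = Ex f + Ex g.
Proof. exact: RintegralD. Qed.

Lemma ExZ c f : rintegrable f -> Ex (fun x => c * f x) = c * Ex f.
Proof. exact: RintegralZl. Qed.

Lemma ExB f g : rintegrable f -> rintegrable g -> Ex (fun x => f x - g x) = Ex f - Ex g.
Proof. exact: RintegralB. Qed.

Lemma Ex_sum (I : Type) (s : seq I) (F : I -> T -> R) :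
  (forall i, rintegrable (F i)) -> Ex (fun x => \sum_(i <- s) F i x) = \sum_(i <- s) Ex (F i).
Proof.
move=> Fi; elim: s => [|i s ih].
  by rewrite big_nil (@eq_Ex _ (fun=> 0)) ?Ex_cst // => x; rewrite big_nil.
rewrite big_cons -ih -ExD; last exact: rintegrable_sum.
  by apply: eq_Ex => x; rewrite big_cons.
exact: Fi.
Qed.

Lemma integral_EFin_Ex f : rintegrable f -> (\int[P]_x (f x)%:E = (Ex f)%:E)%E.
Proof. by move=> fi; rewrite /Ex /Rintegral fineK //; exact: integrable_fin_num. Qed.

Lemma rintegrable_ge0_bounded f (B : R) : measurable_fun setT f ->
  (forall x, 0 <= f x) -> (\int[P]_x (f x)%:E <= B%:E)%E ->
  rintegrable f /\ Ex f <= B.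
Proof.
move=> mf f0 fB.
have fi : rintegrable f.
  apply/integrableP; split; first exact/measurable_EFinP.
  under eq_integral do rewrite /= ger0_norm ?f0 //.
  exact: le_lt_trans fB (ltry B).
by split => //; rewrite -lee_fin -integral_EFin_Ex.
Qed.

Variable d : nat.
Implicit Types (D : T -> 'rV[R]_d).

Definition mean D : 'rV[R]_d := \row_j Ex (fun x => D x ord0 j).
(* [Emean P C x] unfolds to [mean P (fun xi => C xi x)]. *)

Lemma measurable_sqnorm D : (forall j, rintegrable (fun x => D x ord0 j)) ->
  measurable_fun setT (fun x => sqnorm (D x)).
Proof.
move=> Di; apply: measurable_sum => j.
by apply: measurable_funM; apply/measurable_EFinP; exact: measurable_int (Di j).
Qed.

Lemma mean_avg (n : nat) (D : 'I_n -> T -> 'rV[R]_d) :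
  (forall i j, rintegrable (fun x => D i x ord0 j)) ->
  mean (fun x => n%:R^-1 *: \sum_i D i x) = n%:R^-1 *: \sum_i mean (D i).
Proof.
move=> Di; apply/rowP => j; rewrite !mxE summxE.
rewrite (@eq_Ex _ (fun x => n%:R^-1 * \sum_i D i x ord0 j)); last first.
  by move=> x; rewrite mxE summxE.
rewrite ExZ ?Ex_sum //; last exact: rintegrable_sum.
by congr (_ * _); apply: eq_bigr => i _; rewrite mxE.
Qed.

(* Bias-variance decomposition: the cross term [2 a <D - mean D, a mean D + w>]
   has expectation 0. *)
Lemma Ex_sqnorm_affine_le D (B a : R) (w : 'rV[R]_d) :
  (forall j, rintegrable (fun x => D x ord0 j)) ->
  (\int[P]_x (sqnorm (D x - mean D))%:E <= B%:E)%E ->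
  rintegrable (fun x => sqnorm (a *: D x + w)) /\
  Ex (fun x => sqnorm (a *: D x + w)) <= sqnorm (a *: mean D + w) + a ^+ 2 * B.
Proof.
move=> Di DB; set z := a *: mean D + w.
have Ci j : rintegrable (fun x => (D x - mean D) ord0 j).
  apply: eq_rintegrable (rintegrableB (Di j) (rintegrable_cst (mean D ord0 j))) => x.
  by rewrite !mxE.
have [sqi sqB] := rintegrable_ge0_bounded (measurable_sqnorm Ci) (fun x => sqnorm_ge0 _) DB.
have cross_i j : rintegrable (fun x => (D x - mean D) ord0 j * z ord0 j).
  by apply: eq_rintegrable (rintegrableZ (z ord0 j) (Ci j)) => x; rewrite mulrC.
have crossi : rintegrable (fun x => dotv (D x - mean D) z) by exact: rintegrable_sum.
have cross0 : Ex (fun x => dotv (D x - mean D) z) = 0.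
  rewrite Ex_sum //; apply: big1 => j _.
  rewrite (@eq_Ex _ (fun x => z ord0 j * (D x ord0 j - mean D ord0 j))); last first.
    by move=> x; rewrite !mxE mulrC.
  rewrite ExZ; last by apply: rintegrableB; [exact: Di | exact: rintegrable_cst].
  rewrite ExB ?Ex_cst; [|exact: Di | exact: rintegrable_cst].
  by rewrite [mean D ord0 j]mxE subrr mulr0.
have expand x : sqnorm (a *: D x + w) =
    a ^+ 2 * sqnorm (D x - mean D) + 2 * a * dotv (D x - mean D) z + sqnorm z.
  have -> : a *: D x + w = a *: (D x - mean D) + z by rewrite /z scalerBr addrA subrK.
  by rewrite [LHS]sqnormD sqnormZ dotvZl; ring.
have vi : rintegrable (fun x => a ^+ 2 * sqnorm (D x - mean D) + 2 * a * dotv (D x - mean D) z).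
  by apply: rintegrableD; apply: rintegrableZ.
split; first by apply: eq_rintegrable (rintegrableD vi (rintegrable_cst _)) => x; rewrite expand.
rewrite (eq_Ex expand) ExD; [|exact: vi | exact: rintegrable_cst].
rewrite ExD; [|exact: rintegrableZ | exact: rintegrableZ].
rewrite !ExZ // cross0 Ex_cst mulr0 addr0 addrC lerD2l.
by rewrite ler_wpM2l ?sqr_ge0.
Qed.

End Expectation.

Lemma step_size_le (R : realType) (g L a : R) : 0 < g -> 0 <= L -> 0 <= a ->
  g <= (L + a)^-1 -> g * L + g ^+ 2 * a ^+ 2 <= 1.
Proof.
move=> g0 L0 a0 gLa.
have La : 0 < L + a.
  rewrite ltNge; apply/negP => La0.
  have : (L + a)^-1 <= 0 by rewrite invr_le0.
  lra.
have gLa1 : g * (L + a) <= 1 by rewrite -(ler_pM2r La) mulVf ?gt_eqF // in gLa.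
have gL0 : 0 <= g * L := mulr_ge0 (ltW g0) L0.
have ga1 : g * a <= 1 by lra.
by have := ler_piMl (mulr_ge0 (ltW g0) a0) ga1; rewrite -expr2 exprMn; lra.
Qed.

Section DianaStep.
Context (R : realType) (d n : nat).
Variables (fs : 'I_n -> 'rV[R]_d -> R) (gf : 'I_n -> 'rV[R]_d -> 'rV[R]_d)
  (Ls : 'I_n -> R) (L : R) (xstar : 'rV[R]_d) (mu gamma lambda r r_av : R).
Local Notation f := (fun x => n%:R^-1 * \sum_(i < n) fs i x).
Local Notation gradf := (fun x => n%:R^-1 *: \sum_(i < n) gf i x).
Local Notation Ltilde := (Num.sqrt (n%:R^-1 * \sum_(i < n) Ls i ^+ 2)).
Local Notation sstar := (Num.sqrt ((1 + r) / (2 * r)) - 1).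
Local Notation thetastar := (sstar * (1 + sstar) * r / r_av).
Local Notation rho := (Num.max (1 - gamma * mu) ((r + 1) / 2)).
Hypotheses (fs_smooth : forall i, smooth_with (fs i) (gf i) (Ls i))
  (gradf_lipschitz : forall x y, enorm (gradf x - gradf y) <= L * enorm (x - y))
  (r_gt0 : 0 < r) (r_lt1 : r < 1) (r_av_gt0 : 0 < r_av) (gamma_gt0 : 0 < gamma)
  (gamma_le : gamma <= (L + Ltilde * Num.sqrt (r_av / r) / sstar)^-1).

Definition lyapunov (x : 'rV[R]_d) (h : 'I_n -> 'rV[R]_d) : R :=
  f x - f xstar + gamma / (2 * thetastar) * (n%:R^-1 * \sum_(i < n) sqnorm (gf i x - h i)).

Lemma sstar_gt0 : 0 < sstar.
Proof.
have r0 := r_gt0; have r1 := r_lt1; have r2 : 0 < 2 * r by lra.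
by rewrite subr_gt0 -{1}sqrtr1 ltr_sqrt ?divr_gt0 ?ltr_pdivlMr //; lra.
Qed.

Lemma sqr_1Dsstar : (1 + sstar) ^+ 2 = (1 + r) / (2 * r).
Proof.
have r0 := r_gt0; have r2 : 0 <= 2 * r by lra.
by rewrite addrC subrK sqr_sqrtr // divr_ge0 //; lra.
Qed.

Lemma thetastar_gt0 : 0 < thetastar.
Proof.
have s0 := sstar_gt0; have r0 := r_gt0; have ra0 := r_av_gt0.
by rewrite divr_gt0 // !mulr_gt0 //; lra.
Qed.

Lemma thetastar_coef :
  gamma / (2 * thetastar) * (1 + sstar^-1) * Ltilde ^+ 2
  = gamma / 2 * (Ltilde * Num.sqrt (r_av / r) / sstar) ^+ 2.
Proof.
have s0 := sstar_gt0; have r0 := r_gt0; have ra0 := r_av_gt0.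
set s := sstar in s0 *.
rewrite !exprMn [Num.sqrt (r_av / r) ^+ 2]sqr_sqrtr ?divr_ge0 ?ltW //.
have s1 : 0 < 1 + s by lra.
by field; rewrite !gt_eqF.
Qed.

(* [thetastar] is the weight for which the error terms of both the averaged
   and the shifted compressors contract by the factor [(r + 1) / 2]. *)
Lemma thetastar_contraction :
  gamma / 2 * r_av + gamma / (2 * thetastar) * (1 + sstar) * r
  = gamma / (2 * thetastar) * ((r + 1) / 2).
Proof.
have s0 := sstar_gt0; have s2 := sqr_1Dsstar; have r0 := r_gt0; have ra0 := r_av_gt0.
set s := sstar in s0 s2 *.
have s1 : 0 < 1 + s by lra.
have -> : (r + 1) / 2 = r * (1 + s) ^+ 2 by rewrite s2; field; rewrite gt_eqF.
by field; rewrite !gt_eqF.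
Qed.

Lemma descent_step x g :
  f (x - gamma *: g) <= f x - gamma / 2 * sqnorm (gradf x)
    + gamma / 2 * sqnorm (g - gradf x) - gamma / 2 * (1 - gamma * L) * sqnorm g.
Proof.
have := descent_lemma x (x - gamma *: g)
  (has_gradient_avg (fun i => (fs_smooth i).1)) gradf_lipschitz.
have -> : x - gamma *: g - x = (- gamma) *: g by rewrite addrAC subrr add0r scaleNr.
by rewrite dotvZr sqnormZ sqrrN sqnormB (dotvC g); lra.
Qed.

Lemma shift_err_step x g (h dd : 'I_n -> 'rV[R]_d) s : 0 < s ->
  n%:R^-1 * \sum_(i < n) sqnorm (gf i (x - gamma *: g) - (h i + lambda *: dd i))
  <= (1 + s) * (n%:R^-1 * \sum_(i < n) sqnorm ((- lambda) *: dd i + (gf i x - h i)))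
     + (1 + s^-1) * Ltilde ^+ 2 * (gamma ^+ 2 * sqnorm g).
Proof.
move=> s0; set x' := x - gamma *: g.
have step i : sqnorm (gf i x' - (h i + lambda *: dd i)) <=
    (1 + s) * sqnorm ((- lambda) *: dd i + (gf i x - h i))
    + (1 + s^-1) * (Ls i ^+ 2 * (gamma ^+ 2 * sqnorm g)).
  have -> : gf i x' - (h i + lambda *: dd i)
      = ((- lambda) *: dd i + (gf i x - h i)) + (gf i x' - gf i x).
    by apply/rowP => j; rewrite !mxE; ring.
  apply: le_trans (sqnormD_le _ _ s0) _; rewrite lerD2l; apply: ler_wpM2l.
    by rewrite addr_ge0 // invr_ge0 ltW.
  have -> : gamma ^+ 2 * sqnorm g = sqnorm (x' - x).
    by rewrite /x' addrAC subrr add0r -scaleNr sqnormZ sqrrN.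
  exact/sqnorm_le/(fs_smooth i).2.
rewrite sqr_sqrtr ?mulr_ge0 ?invr_ge0 ?sumr_ge0 // => [|i _]; last exact: sqr_ge0.
apply: le_trans (ler_wpM2l _ (ler_sum _ (fun i _ => step i))) _; first by rewrite invr_ge0.
by rewrite big_split /= -!mulr_sumr -mulr_suml; lra.
Qed.

Lemma lyapunov_step_le x (h dd : 'I_n -> 'rV[R]_d) hb :
  hb = n%:R^-1 *: \sum_(i < n) h i ->
  lyapunov (x - gamma *: (hb + n%:R^-1 *: \sum_(i < n) dd i)) (fun i => h i + lambda *: dd i)
  <= f x - f xstar - gamma / 2 * sqnorm (gradf x)
     + gamma / 2 * sqnorm (n%:R^-1 *: \sum_(i < n) dd i - n%:R^-1 *: \sum_(i < n) (gf i x - h i))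
     + gamma / (2 * thetastar) * (1 + sstar)
       * (n%:R^-1 * \sum_(i < n) sqnorm ((- lambda) *: dd i + (gf i x - h i))).
Proof.
move=> hbE; set g := hb + _.
have g0 := gamma_gt0; have s0 := sstar_gt0; have th0 := thetastar_gt0.
have c0 : 0 < gamma / (2 * thetastar) by rewrite divr_gt0 // mulr_gt0.
have gE : g - gradf x
    = n%:R^-1 *: \sum_(i < n) dd i - n%:R^-1 *: \sum_(i < n) (gf i x - h i).
  by rewrite /g hbE sumrB scalerBr opprB addrCA addrA.
have descent := descent_step x g; rewrite gE in descent.
have shift := ler_wpM2l (ltW c0) (shift_err_step x g h dd s0).
have gterm : gamma / (2 * thetastar) * (1 + sstar^-1) * Ltilde ^+ 2 * (gamma ^+ 2 * sqnorm g)
    <= gamma / 2 * (1 - gamma * L) * sqnorm g.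
  rewrite thetastar_coef; set a := Ltilde * _ / _.
  have [L0|L0] := leP 0 L; last first.
    have /eqP -> : sqnorm g == 0 by rewrite sqnorm_eq0 (lipschitz_neg_trivial gradf_lipschitz L0 g).
    by rewrite !mulr0.
  have a0 : 0 <= a by rewrite divr_ge0 ?mulr_ge0 ?sqrtr_ge0 // ltW.
  have : 0 <= 1 - (gamma * L + gamma ^+ 2 * a ^+ 2) by rewrite subr_ge0 step_size_le.
  by move/(mulr_ge0 (mulr_ge0 (ltW g0) (sqnorm_ge0 g))); lra.
move: descent shift gterm; rewrite /lyapunov /=; lra.
Qed.

Section Compression.
Context (dT : measure_display) (T : measurableType dT).
Variables (P : probability T R) (C : 'I_n -> T -> 'rV[R]_d -> 'rV[R]_d)
  (eta omega omega_av : R).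
Hypotheses (n_gt0 : (0 < n)%N) (xstar_min : forall x, f xstar <= f x)
  (PL : forall x, 2 * mu * (f x - f xstar) <= sqnorm (gradf x))
  (lambda_gt0 : 0 < lambda) (lambda_le1 : lambda <= 1)
  (C_class : forall i, in_class P (C i) eta omega)
  (C_var_av : forall xs : 'I_n -> 'rV[R]_d,
     (\int[P]_xi (sqnorm (n%:R^-1 *: \sum_(i < n) (C i xi (xs i) - Emean P (C i) (xs i))))%:E
      <= (omega_av / n%:R * \sum_(i < n) sqnorm (xs i))%:E)%E)
  (r_ge : (1 - lambda + lambda * eta) ^+ 2 + lambda ^+ 2 * omega <= r)
  (r_av_ge : eta ^+ 2 + omega_av <= r_av).

Lemma Ex_shift_err_le i u :
  rintegrable P (fun xi => sqnorm ((- lambda) *: C i xi u + u)) /\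
  Ex P (fun xi => sqnorm ((- lambda) *: C i xi u + u)) <= r * sqnorm u.
Proof.
have [Ci [bias var]] := C_class i u.
have [Yi YE] := Ex_sqnorm_affine_le (- lambda) u Ci var.
split => //; apply: le_trans YE _.
have l01 : 0 <= lambda <= 1 by rewrite ltW.
have := sqnorm_shift_le l01 bias; have := ler_wpM2r (sqnorm_ge0 u) r_ge.
by rewrite sqrrN; lra.
Qed.

Lemma Ex_avg_err_le (u : 'I_n -> 'rV[R]_d) :
  rintegrable P (fun xi =>
    sqnorm (n%:R^-1 *: \sum_(i < n) C i xi (u i) - n%:R^-1 *: \sum_(i < n) u i)) /\
  Ex P (fun xi =>
    sqnorm (n%:R^-1 *: \sum_(i < n) C i xi (u i) - n%:R^-1 *: \sum_(i < n) u i))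
  <= r_av * (n%:R^-1 * \sum_(i < n) sqnorm (u i)).
Proof.
set D := fun xi => n%:R^-1 *: \sum_(i < n) C i xi (u i).
have Ci i j := (C_class i (u i)).1 j.
have Dj j : rintegrable P (fun xi => D xi ord0 j).
  apply: eq_rintegrable (rintegrableZ n%:R^-1 (rintegrable_sum _ (fun i => Ci i j))) => xi.
  by rewrite /D mxE summxE.
have meanD : mean P D = n%:R^-1 *: \sum_(i < n) Emean P (C i) (u i) := mean_avg (fun i j => Ci i j).
have var : (\int[P]_xi (sqnorm (D xi - mean P D))%:E
    <= (omega_av / n%:R * \sum_(i < n) sqnorm (u i))%:E)%E.
  by rewrite meanD; under eq_integral => xi _ do rewrite /D -scalerBr -sumrB.
have [Xi XE] := Ex_sqnorm_affine_le 1 (- (n%:R^-1 *: \sum_(i < n) u i)) Dj var.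
have scale1 xi : sqnorm (1 *: D xi - n%:R^-1 *: \sum_(i < n) u i)
    = sqnorm (D xi - n%:R^-1 *: \sum_(i < n) u i) by rewrite scale1r.
split; first exact: eq_rintegrable scale1 Xi.
rewrite -(eq_Ex P scale1); apply: le_trans XE _.
rewrite scale1r meanD expr1n mul1r -scalerBr -sumrB.
have bias : sqnorm (n%:R^-1 *: \sum_(i < n) (Emean P (C i) (u i) - u i))
    <= eta ^+ 2 * (n%:R^-1 * \sum_(i < n) sqnorm (u i)).
  apply: le_trans (sqnorm_avg_le _ n_gt0) _.
  rewrite mulrCA ler_wpM2l ?invr_ge0 // mulr_sumr; apply: ler_sum => i _.
  exact/sqnorm_le/(C_class i (u i)).2.1.
have G0 : 0 <= n%:R^-1 * \sum_(i < n) sqnorm (u i).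
  by apply: mulr_ge0; [rewrite invr_ge0 | apply: sumr_ge0 => i _; exact: sqnorm_ge0].
by have := ler_wpM2r G0 r_av_ge; lra.
Qed.

Lemma lyapunov_contraction x (h : 'I_n -> 'rV[R]_d) hb : hb = n%:R^-1 *: \sum_(i < n) h i ->
  exists2 Q : T -> R, rintegrable P Q /\ Ex P Q <= rho * lyapunov x h
  & forall xi, lyapunov (x - gamma *: (hb + n%:R^-1 *: \sum_(i < n) C i xi (gf i x - h i)))
                        (fun i => h i + lambda *: C i xi (gf i x - h i)) <= Q xi.
Proof.
move=> hbE; set u := fun i => gf i x - h i.
set c := gamma / (2 * thetastar).
set G := n%:R^-1 * \sum_(i < n) sqnorm (u i).
pose X xi := sqnorm (n%:R^-1 *: \sum_(i < n) C i xi (u i) - n%:R^-1 *: \sum_(i < n) u i).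
pose Y i xi := sqnorm ((- lambda) *: C i xi (u i) + u i).
pose A := f x - f xstar - gamma / 2 * sqnorm (gradf x).
exists (fun xi => A + gamma / 2 * X xi + c * (1 + sstar) * (n%:R^-1 * \sum_(i < n) Y i xi));
  last by move=> xi; exact: lyapunov_step_le.
have [Xi XE] := Ex_avg_err_le u.
have Yi i := (Ex_shift_err_le i (u i)).1.
have YE : n%:R^-1 * \sum_(i < n) Ex P (Y i) <= r * G.
  rewrite /G mulrCA ler_wpM2l ?invr_ge0 // mulr_sumr; apply: ler_sum => i _.
  exact: (Ex_shift_err_le i (u i)).2.
have Yavgi : rintegrable P (fun xi => n%:R^-1 * \sum_(i < n) Y i xi).
  exact/rintegrableZ/rintegrable_sum.
have AXi : rintegrable P (fun xi => A + gamma / 2 * X xi).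
  by apply: rintegrableD; [exact: rintegrable_cst | exact: rintegrableZ].
split; first by apply: rintegrableD => //; exact: rintegrableZ.
rewrite ExD //; last exact: rintegrableZ.
rewrite ExD; [|exact: rintegrable_cst | exact: rintegrableZ].
rewrite Ex_cst ExZ // ExZ // ExZ; last exact: rintegrable_sum.
rewrite [Ex P (fun xi => \sum_(i < n) Y i xi)]Ex_sum //.
have g0 := gamma_gt0; have th0 := thetastar_gt0; have s0 := sstar_gt0.
have c0 : 0 <= c by rewrite ltW // divr_gt0 // mulr_gt0.
have G0 : 0 <= G by apply: mulr_ge0; [rewrite invr_ge0 | apply: sumr_ge0 => i _; exact: sqnorm_ge0].
have D0 : 0 <= f x - f xstar by rewrite subr_ge0 xstar_min.
have := congr1 (fun z => z * G) thetastar_contraction; rewrite -/c /= => contraction.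
have rho1 : 1 - gamma * mu <= rho by rewrite le_max lexx.
have rho2 : (r + 1) / 2 <= rho by rewrite le_max lexx orbT.
have := ler_wpM2l (ltW g0) (PL x); have := ler_wpM2l (ltW g0) XE.
have := ler_wpM2l (mulr_ge0 c0 (addr_ge0 ler01 (ltW s0))) YE.
have := ler_wpM2r D0 rho1; have := ler_wpM2r (mulr_ge0 c0 G0) rho2.
rewrite /lyapunov /A /X /= -/c -/G; lra.
Qed.

End Compression.

End DianaStep.

Section Trajectory.
Context (T : Type) (R : realType) (d n : nat)
  (gf : 'I_n -> 'rV[R]_d -> 'rV[R]_d) (C : 'I_n -> nat -> T -> 'rV[R]_d -> 'rV[R]_d)
  (gamma lambda : R) (x0 : 'rV[R]_d) (h0 : 'I_n -> 'rV[R]_d).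
Local Notation run := (diana gf C gamma lambda x0 h0).

Lemma diana_eq_prefix (s s' : nat -> T) t :
  (forall m, (m < t)%N -> s m = s' m) -> run s t = run s' t.
Proof.
elim: t => [//|t IH] ss' /=.
by rewrite IH ?ss' // => m mt; apply: ss'; exact: ltnW.
Qed.

Lemma diana_shift_avg s t : (run s t).2 = n%:R^-1 *: \sum_(i < n) (run s t).1.2 i.
Proof.
elim: t => [//|t] /=; case: (run s t) => [[x h] hb] /= ->.
by rewrite big_split /= -scaler_sumr scalerDr !scalerA mulrC.
Qed.

Lemma diana_upd_succ s t xi x h hb : run s t = (x, h, hb) ->
  run (upd s t xi) t.+1 =
  (x - gamma *: (hb + n%:R^-1 *: \sum_(i < n) C i t xi (gf i x - h i)),
   (fun i => h i + lambda *: C i t xi (gf i x - h i)),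
   hb + lambda *: (n%:R^-1 *: \sum_(i < n) C i t xi (gf i x - h i))).
Proof.
move=> sE /=; rewrite /upd eqxx (@diana_eq_prefix _ s) ?sE // => m mt.
by rewrite /upd (ltn_eqF mt).
Qed.

End Trajectory.

Section IteratedExpectation.
Context (dT : measure_display) (T : measurableType dT) (R : realType)
  (P : nat -> probability T R).

Lemma le_iexp k (F G : (nat -> T) -> \bar R) s :
  (forall s, F s <= G s)%E -> (iexp P k F s <= iexp P k G s)%E.
Proof.
elim: k F G s => [|k IH] F G s FG /=; first exact: FG.
by apply: IH => s'; apply: le_integral_pointwise => xi; exact: FG.
Qed.

(* The factor [rho ^+ j] is carried inside the integrals, where it can be
   pulled out of the integrable bound [Q]. *)
Lemma iexp_geometric (Phi : (nat -> T) -> nat -> R) (rho : R) : 0 <= rho ->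
  (forall t s, exists2 Q : T -> R, rintegrable (P t) Q /\ Ex (P t) Q <= rho * Phi s t
     & forall xi, Phi (upd s t xi) t.+1 <= Q xi) ->
  forall t s, (iexp P t (fun s' => (Phi s' t)%:E) s <= (rho ^+ t * Phi s 0)%:E)%E.
Proof.
move=> rho0 step.
suff gen t j s : (iexp P t (fun s' => (rho ^+ j * Phi s' t)%:E) s
                  <= (rho ^+ (t + j) * Phi s 0)%:E)%E.
  move=> t s; rewrite -[t in rho ^+ t]addn0; apply: le_trans (gen t 0%N s).
  by apply: le_iexp => s'; rewrite expr0 mul1r.
elim: t j s => [|t IH] j s /=; first by rewrite add0n.
rewrite addSnnS; apply: le_trans (IH j.+1 s); apply: le_iexp => s'.
have [Q [Qi QE] PhiQ] := step t s'.
have rhoj := exprn_ge0 j rho0.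
apply: (@le_trans _ _ (\int[P t]_xi (rho ^+ j * Q xi)%:E)%E).
  by apply: le_integral_pointwise => xi; rewrite lee_fin ler_wpM2l.
rewrite integral_EFin_Ex; last exact: rintegrableZ.
by rewrite ExZ // lee_fin exprSr -mulrA ler_wpM2l.
Qed.

End IteratedExpectation.

Unset Implicit Arguments. Set Strict Implicit. Set Printing Implicit Defensive.

Theorem theorem4 (R : realType) (d n : nat)
  (dT : measure_display) (T : measurableType dT)
  (fs : 'I_n -> 'rV[R]_d -> R) (gf : 'I_n -> 'rV[R]_d -> 'rV[R]_d)
  (Ls : 'I_n -> R) (L : R) (xstar : 'rV[R]_d) (mu : R)
  (P : nat -> probability T R)
  (C : 'I_n -> nat -> T -> 'rV[R]_d -> 'rV[R]_d)
  (eta omega omega_av gamma lambda : R)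
  (x0 : 'rV[R]_d) (h0 : 'I_n -> 'rV[R]_d) :
  (0 < n)%N ->
  (forall i, convex_fun (fs i)) ->
  (forall i, smooth_with (fs i) (gf i) (Ls i)) ->
  let f := fun x => n%:R^-1 * \sum_(i < n) fs i x in
  let gradf := fun x => n%:R^-1 *: \sum_(i < n) gf i x in
  let Ltilde := Num.sqrt (n%:R^-1 * \sum_(i < n) Ls i ^+ 2) in
  (forall x y, enorm (gradf x - gradf y) <= L * enorm (x - y)) ->
  L <= Ltilde ->
  (forall x, f xstar <= f x) ->
  0 < mu ->
  (forall x, 2 * mu * (f x - f xstar) <= sqnorm (gradf x)) ->
  0 <= eta -> eta < 1 -> 0 <= omega -> 0 <= omega_av -> omega_av <= omega ->
  (forall i t, in_class (P t) (C i t) eta omega) ->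
  (forall t (xs : 'I_n -> 'rV[R]_d),
     (\int[P t]_xi
        (sqnorm (n%:R^-1 *: \sum_(i < n)
                   (C i t xi (xs i) - Emean (P t) (C i t) (xs i))))%:E
      <= (omega_av / n%:R * \sum_(i < n) sqnorm (xs i))%:E)%E) ->
  0 < lambda -> lambda <= 1 ->
  let r := (1 - lambda + lambda * eta) ^+ 2 + lambda ^+ 2 * omega in
  let r_av := eta ^+ 2 + omega_av in
  let sstar := Num.sqrt ((1 + r) / (2 * r)) - 1 in
  let thetastar := sstar * (1 + sstar) * r / r_av in
  0 < r -> 0 < r_av -> r < 1 ->
  0 < gamma ->
  gamma <= (L + Ltilde * Num.sqrt (r_av / r) / sstar)^-1 ->
  let Psi := fun (s : nat -> T) (t : nat) =>
    let: (x, h, _) := diana gf C gamma lambda x0 h0 s t in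
    f x - f xstar
    + gamma / (2 * thetastar) * (n%:R^-1 * \sum_(i < n) sqnorm (gf i x - h i)) in
  forall (s : nat -> T) (t : nat),
    (iexp P t (fun s' => (Psi s' t)%:E) s
     <= ((Num.max (1 - gamma * mu) ((r + 1) / 2)) ^+ t * Psi s 0)%:E)%E.

Proof.
move=> n_gt0 _ fs_smooth f gradf Ltilde gradf_lipschitz _ xstar_min _ PL _ _ _ _ _
  C_class C_var_av lambda_gt0 lambda_le1 r r_av sstar thetastar r_gt0 r_av_gt0 r_lt1
  gamma_gt0 gamma_le Psi s0 t0.
apply: iexp_geometric => [|t s]; first by rewrite le_max divr_ge0 ?orbT // addr_ge0 // ltW.
case sE: (diana gf C gamma lambda x0 h0 s t) => [[x h] hb].
have hbE : hb = n%:R^-1 *: \sum_(i < n) h i.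
  by have := diana_shift_avg gf C gamma lambda x0 h0 s t; rewrite sE.
have [Q QE PsiQ] := lyapunov_contraction fs_smooth gradf_lipschitz r_gt0 r_lt1 r_av_gt0
  gamma_gt0 gamma_le n_gt0 xstar_min PL lambda_gt0 lambda_le1 (fun i => C_class i t) (C_var_av t)
  (lexx _) (lexx _) x hbE.
exists Q; first by rewrite /Psi sE.
by move=> xi; rewrite /Psi (diana_upd_succ xi sE); exact: PsiQ.
Qed.
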